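(* A reflexive oriented graph $D$ is transitive if and only if $G=\mathrm{Split}(D)$ is WDI. Furthermore, if $G$ is WDI, then the perfect matching $M=\{\mathrm{out}(v)\to\mathrm{in}(v)\mid v\in V(D)\}$ is exactly the set of disimplicial arcs of $G$.
   Context: A digraph is a finite vertex set $V$ with arc set $E\subseteq V\times V$ (loops allowed). $D$ is reflexive if $v\to v\in E$ for all $v$; oriented if $v\to w$ and $w\to v$ are both arcs only when $v=w$; a vertex $v$ is transitive if $x\to y$ is an arc for every in-neighbor $x$ and out-neighbor $y$ of $v$, and $D$ is transitive if all vertices are. Source: no in-neighbors; sink: no out-neighbors. $\mathrm{Split}(D)$ has a vertex $\mathrm{out}(v)$ for each non-sink $v$ and a vertex $\mathrm{in}(w)$ for each non-source $w$ (all distinct), with $\mathrm{out}(v)\to\mathrm{in}(w)$ an arc iff $v\to w\in E(D)$, no other arcs. A diclique is a pair $(V,W)$ of nonempty vertex sets, written $V\to W$, with $v\to w$ an arc for all $v\in V$, $w\in W$; an arc $v\to w$ belongs to it if $v\in V$, $w\in W$. It is maximal if it is not properly contained (componentwise) in another diclique. An arc $v\to w$ is disimplicial if $x\to y$ is an arc for all in-neighbors $x$ of $w$ and out-neighbors $y$ of $v$. A reduced diclique is a maximal diclique containing a disimplicial arc. A digraph is weakly diclique irreducible (WDI) if every arc belongs to some reduced diclique. *)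

From mathcomp Require Import all_boot.
Set Implicit Arguments. Unset Strict Implicit. Unset Printing Implicit Defensive.

Section Digraphs.
Variables (T : finType) (E : rel T).

Definition reflexive_dg : Prop := forall v, E v v.
Definition oriented_dg : Prop := forall v w, E v w -> E w v -> v = w.
Definition transitive_vertex (v : T) : Prop :=
  forall x y, E x v -> E v y -> E x y.
Definition transitive_dg : Prop := forall v, transitive_vertex v.
Definition is_source (v : T) : bool := [forall x, ~~ E x v].
Definition is_sink (v : T) : bool := [forall y, ~~ E v y].

Definition diclique (A B : {set T}) : Prop :=
  A != set0 /\ B != set0 /\ (forall v w, v \in A -> w \in B -> E v w).
Definition maximal_diclique (A B : {set T}) : Prop :=
  diclique A B /\
  forall A' B', diclique A' B' -> A \subset A' -> B \subset B' -> A = A' /\ B = B'.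
Definition disimplicial (v w : T) : Prop :=
  E v w /\ forall x y, E x w -> E v y -> E x y.
Definition reduced_diclique (A B : {set T}) : Prop :=
  maximal_diclique A B /\ exists v w, [/\ v \in A, w \in B & disimplicial v w].
Definition WDI : Prop :=
  forall v w, E v w -> exists A B, [/\ reduced_diclique A B, v \in A & w \in B].
End Digraphs.

(* Split(D): vertices out(v) = inl v for non-sink v, in(w) = inr w for non-source w. *)
Section Split.
Variables (V : finType) (E : rel V).
Definition split_vertex (x : V + V) : bool :=
  match x with inl v => ~~ is_sink E v | inr w => ~~ is_source E w end.
Definition split_type : finType := {x : V + V | split_vertex x}.
Definition split_arc : rel split_type := fun x y =>
  match val x, val y with inl v, inr w => E v w | _, _ => false end.
End Split.

From mathcomp Require Import all_boot.
Set Implicit Arguments. Unset Strict Implicit. Unset Printing Implicit Defensive.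

(* If out(v) -> in(w)
   is disimplicial then reflexivity gives w -> v, so v = w by orientation, and
   v is transitive; conversely out(v) -> in(v) is disimplicial for transitive v.
   For transitive v, the in-neighbours of v (as out-vertices) and its
   out-neighbours (as in-vertices) form a maximal diclique through every arc
   leaving out(v).  Conversely, a reduced diclique through out(v) -> in(v) has
   a disimplicial arc out(c) -> in(c); the diclique contains v -> c and c -> v,
   so v = c is transitive. *)

Section SplitDigraph.
Variables (V : finType) (E : rel V).
Hypothesis refl : reflexive_dg E.

Lemma split_vertex_out v : split_vertex E (inl v).
Proof. by apply/forallPn; exists v; rewrite negbK. Qed.

Lemma split_vertex_in v : split_vertex E (inr v).
Proof. by apply/forallPn; exists v; rewrite negbK. Qed.

Definition split_out v : split_type E := exist _ (inl v) (split_vertex_out v).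
Definition split_in v : split_type E := exist _ (inr v) (split_vertex_in v).

Lemma disimplicial_split_loop v :
  transitive_vertex E v -> disimplicial (@split_arc V E) (split_out v) (split_in v).
Proof. by move=> trans_v; split=> [|[[a|a] pa] [[b|b] pb]] //=; apply: trans_v. Qed.

Lemma disimplicial_splitP (orient : oriented_dg E) (x y : split_type E) :
  disimplicial (@split_arc V E) x y <->
  exists v, [/\ val x = inl v, val y = inr v & transitive_vertex E v].
Proof.
split.
- case: x y => [[v|v] pv] [[w|w] pw] [] //= Evw disimpl.
  have Ewv : E w v := disimpl (split_out w) (split_in v) (refl w) (refl v).
  have eq_vw := orient v w Evw Ewv; subst w.
  by exists v; split=> // a b Eav Evb; apply: (disimpl (split_out a) (split_in b)).
- move=> [v [xv yv /disimplicial_split_loop]].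
  have -> : x = split_out v by apply: val_inj.
  by have -> : y = split_in v by apply: val_inj.
Qed.

Definition in_star v : {set split_type E} :=
  [set z | if val z is inl a then E a v else false].
Definition out_star v : {set split_type E} :=
  [set z | if val z is inr b then E v b else false].

Lemma split_out_in_star v : split_out v \in in_star v.
Proof. by rewrite inE /=. Qed.

Lemma split_in_out_star v w : (split_in w \in out_star v) = E v w.
Proof. by rewrite inE. Qed.

Lemma diclique_star v :
  transitive_vertex E v -> diclique (@split_arc V E) (in_star v) (out_star v).
Proof.
move=> trans_v; split; first by apply/set0Pn; exists (split_out v); apply: split_out_in_star.
split; first by apply/set0Pn; exists (split_in v); rewrite split_in_out_star.
move=> x y; rewrite !inE /split_arc.
by case: (val x) => // a; case: (val y) => // b; apply: trans_v.
Qed.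

Lemma maximal_diclique_star v :
  transitive_vertex E v -> maximal_diclique (@split_arc V E) (in_star v) (out_star v).
Proof.
move=> trans_v; split; first exact: diclique_star.
move=> A B [_ [_ arcAB]] subA subB.
have outA := subsetP subA _ (split_out_in_star v).
have inB : split_in v \in B by apply: (subsetP subB); rewrite split_in_out_star.
split; apply/eqP; rewrite eqEsubset ?subA ?subB; apply/subsetP => z zz.
- by have := arcAB _ _ zz inB; rewrite inE /split_arc /=; case: (val z).
- by have := arcAB _ _ outA zz; rewrite inE /split_arc /=; case: (val z).
Qed.

Lemma reduced_diclique_star v :
  transitive_vertex E v -> reduced_diclique (@split_arc V E) (in_star v) (out_star v).
Proof.
move=> trans_v; split; first exact: maximal_diclique_star.
exists (split_out v), (split_in v); split; last exact: disimplicial_split_loop.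
  exact: split_out_in_star.
by rewrite split_in_out_star.
Qed.

Lemma transitive_split_WDI : transitive_dg E -> WDI (@split_arc V E).
Proof.
move=> trans [[v|v] pv] [[w|w] pw] //= Evw.
exists (in_star v), (out_star v); split; first exact: reduced_diclique_star (trans v).
  by rewrite inE /=.
by rewrite inE.
Qed.

Lemma split_WDI_transitive : oriented_dg E -> WDI (@split_arc V E) -> transitive_dg E.
Proof.
move=> orient wdi v.
have [A [B [[[[_ [_ arcAB]] _] [x [y [xA yB disimpl_xy]]]] outA inB]]] :=
  wdi (split_out v) (split_in v) (refl v).
have [c [xc yc trans_c]] := (disimplicial_splitP orient x y).1 disimpl_xy.
have Evc : E v c by have := arcAB _ _ outA yB; rewrite /split_arc /= yc.
have Ecv : E c v by have := arcAB _ _ xA inB; rewrite /split_arc /= xc.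
by rewrite (orient v c Evc Ecv).
Qed.

End SplitDigraph.

Theorem theorem13 (V : finType) (E : rel V) :
  reflexive_dg E -> oriented_dg E ->
  (transitive_dg E <-> WDI (@split_arc V E)) /\
  (WDI (@split_arc V E) ->
   forall x y : split_type E,
     disimplicial (@split_arc V E) x y <-> exists v : V, val x = inl v /\ val y = inr v).
Proof.
move=> refl orient; split.
  split; [exact: transitive_split_WDI | exact: split_WDI_transitive].
move=> /(split_WDI_transitive refl orient) trans x y.
split=> [/(disimplicial_splitP refl orient) [v [? ? _]] | [v [? ?]]]; first by exists v.
by apply/(disimplicial_splitP refl orient); exists v; split.
Qed.
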